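(* Let $G_1$ and $G_2$ be connected bipartite graphs, where $G_i$ has bipartition $(A_i,B_i)$ with $|A_i|,|B_i|\ge 3$, and let $H_1,H_2$ be the graphs obtained from them by the construction described in the context. Then $G_1\simeq G_2$ if and only if $H_1\simeq H_2$.
   Context: All graphs are finite, simple, undirected; $\simeq$ denotes graph isomorphism. Construction: given a bipartite graph $G$ with bipartition $(A,B)$, the graph $H$ has vertex set $A\cup B\cup C$ where $C=\{c_e : e\in E(G)\}$ is a set of new vertices, one per edge of $G$; its edges are: all pairs $ab$ with $a\in A$, $b\in B$ (so $A\cup B$ induces the complete bipartite graph with parts $A,B$), and for each edge $e=ab$ of $G$ ($a\in A$, $b\in B$) the two edges $ac_e$ and $bc_e$. There are no other edges. *)

From mathcomp Require Import all_boot.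
Set Implicit Arguments. Unset Strict Implicit. Unset Printing Implicit Defensive.

Definition graph_iso (T1 T2 : finType) (e1 : rel T1) (e2 : rel T2) : Prop :=
  exists f : T1 -> T2, bijective f /\ forall x y, e2 (f x) (f y) = e1 x y.

(* A bipartite graph with bipartition (A,B) is given by the two parts as
   finite types and its edge relation r a b (a in A, b in B).
   Its underlying simple graph lives on A + B. *)
Definition bip_adj (A B : finType) (r : A -> B -> bool) : rel (A + B) :=
  fun u v => match u, v with
  | inl a, inr b => r a b
  | inr b, inl a => r a b
  | _, _ => false
  end.

Definition connected (T : finType) (e : rel T) : Prop :=
  forall x y : T, connect e x y.

(* Edge set of G, one new vertex c_e per edge e = ab *)
Definition edgeT (A B : finType) (r : A -> B -> bool) :=
  {p : A * B | r p.1 p.2}.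

Definition H_adj (A B : finType) (r : A -> B -> bool)
  : rel ((A + B) + edgeT r) :=
  fun u v => match u, v with
  | inl (inl _), inl (inr _) => true
  | inl (inr _), inl (inl _) => true
  | inl (inl a), inr c => (val c).1 == a
  | inr c, inl (inl a) => (val c).1 == a
  | inl (inr b), inr c => (val c).2 == b
  | inr c, inl (inr b) => (val c).2 == b
  | _, _ => false
  end.
Arguments H_adj {A B} r.
Arguments bip_adj {A B} r.

From mathcomp Require Import all_boot.
Set Implicit Arguments. Unset Strict Implicit. Unset Printing Implicit Defensive.

(* In H every vertex of A u B has degree at least 3 (it sees all of the
   opposite part), while every edge vertex c_e has degree 2.  Hence an
   isomorphism H1 ~ H2 maps A1 u B1 onto A2 u B2, and since ab is an edge of G
   exactly when a and b are adjacent in H with a common neighbour (namely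
   c_ab), it restricts to an isomorphism G1 ~ G2.  Conversely, an isomorphism
   f : G1 ~ G2 of connected bipartite graphs either preserves or swaps the two
   parts, so it is an isomorphism of the complete bipartite graphs on
   A_i u B_i, and it extends to H1 ~ H2 by sending c_ab to c_(f a)(f b). *)

Definition deg (T : finType) (e : rel T) (x : T) : nat := #|[set y | e x y]|.

Lemma deg_ge_card (T S : finType) (e : rel T) x (i : S -> T) :
  injective i -> (forall s, e x (i s)) -> #|S| <= deg e x.
Proof.
move=> i_inj adj_i; rewrite /deg -cardsT -(card_imset _ i_inj).
by apply/subset_leq_card/subsetP => _ /imsetP[s _ ->]; rewrite inE.
Qed.

Definition common_nbr (T : finType) (e : rel T) (x y : T) : bool :=
  [exists z, e x z && e y z].

Section Isomorphism.
Variables (T1 T2 : finType) (e1 : rel T1) (e2 : rel T2).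
Variables (f : T1 -> T2) (g : T2 -> T1).
Hypotheses (fK : cancel f g) (gK : cancel g f).
Hypothesis f_hom : forall x y, e2 (f x) (f y) = e1 x y.

Lemma can_iso_hom x y : e1 (g x) (g y) = e2 x y.
Proof. by rewrite -f_hom !gK. Qed.

Lemma deg_iso x : deg e2 (f x) = deg e1 x.
Proof.
rewrite /deg -(card_imset _ (can_inj fK)); apply: eq_card => z; rewrite inE.
apply/idP/imsetP => [exz | [y]]; last by rewrite inE => exy ->; rewrite f_hom.
by exists (g z); rewrite ?gK // inE -f_hom gK.
Qed.

Lemma common_nbr_iso x y : common_nbr e2 (f x) (f y) = common_nbr e1 x y.
Proof.
apply/existsP/existsP => [[z] | [z]]; last by exists (f z); rewrite !f_hom.
by exists (g z); rewrite -!f_hom gK.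
Qed.

End Isomorphism.

Definition is_inl (A B : Type) (u : A + B) : bool := if u is inl _ then true else false.

Section Construction.
Variables (A B : finType) (r : A -> B -> bool).

Definition ends (c : edgeT r) : pred (A + B) := pred2 (inl (val c).1) (inr (val c).2).

Lemma bip_adj_sides u v : bip_adj r u v -> is_inl v = ~~ is_inl u.
Proof. by case: u; case: v. Qed.

Lemma H_adj_sym : symmetric (H_adj r).
Proof. by case=> [[a|b]|c] [[a'|b']|c'] //=; rewrite eq_sym. Qed.

Lemma H_adj_vertices u v : H_adj r (inl u) (inl v) = (is_inl u != is_inl v).
Proof. by case: u; case: v. Qed.

Lemma H_adj_edge w c : H_adj r (inl w) (inr c) = (w \in ends c).
Proof. by case: w => [a|b]; rewrite !inE /= ?orbF eq_sym. Qed.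

Lemma ends_inj c1 c2 : ends c1 =i ends c2 -> c1 = c2.
Proof.
move: c1 c2 => [[a1 b1] ab1] [[a2 b2] ab2] eq_ends.
move: (eq_ends (inl a1)) (eq_ends (inr b1)); rewrite !inE /= !eqxx /= orbF.
by move=> /esym/eqP[a12] /esym/eqP[b12]; apply: val_inj; rewrite /= a12 b12.
Qed.

Lemma deg_H_edge c : deg (H_adj r) (inr c) <= 2.
Proof.
rewrite /deg -(cards2 (inl (inl (val c).1) : (A + B) + edgeT r) (inl (inr (val c).2))).
apply/subset_leq_card/subsetP => -[w|c']; rewrite !inE //.
by rewrite H_adj_sym H_adj_edge !inE.
Qed.

Lemma deg_H_vertex u : 3 <= #|A| -> 3 <= #|B| -> 3 <= deg (H_adj r) (inl u).
Proof.
move=> A3 B3; case: u => [a|b].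
- by apply: leq_trans B3 (deg_ge_card (inj_comp (@inl_inj _ _) (@inr_inj A B)) _).
- by apply: leq_trans A3 (deg_ge_card (inj_comp (@inl_inj _ _) (@inl_inj A B)) _).
Qed.

Lemma bip_adjE x y :
  bip_adj r x y = H_adj r (inl x) (inl y) && common_nbr (H_adj r) (inl x) (inl y).
Proof.
have edgeE a b : r a b = common_nbr (H_adj r) (inl (inl a)) (inl (inr b)).
  apply/idP/existsP => [rab | [[[a'|b']|[[a' b'] rab]] //=]].
    by exists (inr (exist _ (a, b) rab)); rewrite /= !eqxx.
  by case/andP=> /eqP<- /eqP<-.
case: x => [a|b]; case: y => [a'|b'] //=; rewrite edgeE //.
by apply: eq_existsb => z; rewrite andbC.
Qed.

End Construction.

Section HToG.
Variables (A1 B1 : finType) (r1 : A1 -> B1 -> bool).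
Variables (A2 B2 : finType) (r2 : A2 -> B2 -> bool).

Lemma H_iso_vertex (g : (A1 + B1) + edgeT r1 -> (A2 + B2) + edgeT r2) h :
    cancel g h -> cancel h g -> (forall u v, H_adj r2 (g u) (g v) = H_adj r1 u v) ->
  3 <= #|A1| -> 3 <= #|B1| -> forall x, is_inl (g (inl x)).
Proof.
move=> gK hK g_hom A3 B3 x; case gx: (g (inl x)) => [//|c].
have := deg_H_vertex r1 x A3 B3; rewrite -(deg_iso gK hK g_hom) gx.
by move/leq_trans/(_ (deg_H_edge c)).
Qed.

(* The junk value in the [inr] branch is never reached, by [H_iso_vertex]. *)
Definition vertex_map (g : (A1 + B1) + edgeT r1 -> (A2 + B2) + edgeT r2)
    (x : A1 + B1) : A2 + B2 :=
  match g (inl x) with inl y => y | inr c => inl (val c).1 end.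

Lemma vertex_mapE g x : is_inl (g (inl x)) -> g (inl x) = inl (vertex_map g x).
Proof. by rewrite /vertex_map; case: (g (inl x)). Qed.

End HToG.

Lemma H_iso_G (A1 B1 : finType) (r1 : A1 -> B1 -> bool)
    (A2 B2 : finType) (r2 : A2 -> B2 -> bool)
    (g : (A1 + B1) + edgeT r1 -> (A2 + B2) + edgeT r2) h :
    cancel g h -> cancel h g -> (forall u v, H_adj r2 (g u) (g v) = H_adj r1 u v) ->
  3 <= #|A1| -> 3 <= #|B1| -> 3 <= #|A2| -> 3 <= #|B2| ->
  graph_iso (bip_adj r1) (bip_adj r2).
Proof.
move=> gK hK g_hom A13 B13 A23 B23.
have gE x := vertex_mapE (H_iso_vertex gK hK g_hom A13 B13 x).
have hE y := vertex_mapE (H_iso_vertex hK gK (can_iso_hom hK g_hom) A23 B23 y).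
exists (vertex_map g); split.
  exists (vertex_map h) => [x | y].
    by have := hE (vertex_map g x); rewrite -gE gK => -[].
  by have := gE (vertex_map h y); rewrite -hE hK => -[].
by move=> x y; rewrite !bip_adjE -!gE g_hom (common_nbr_iso hK g_hom).
Qed.

Section GToH.
Variables (A1 B1 : finType) (r1 : A1 -> B1 -> bool).
Variables (A2 B2 : finType) (r2 : A2 -> B2 -> bool).

Lemma bip_iso_sides (f : A1 + B1 -> A2 + B2) :
    (forall x y, bip_adj r2 (f x) (f y) = bip_adj r1 x y) ->
  connected (bip_adj r1) ->
  forall x y, (is_inl (f x) == is_inl x) = (is_inl (f y) == is_inl y).
Proof.
move=> f_hom G1_conn x y.
have closed_side : closed (bip_adj r1) [pred z | is_inl (f z) == is_inl z].
  move=> u v adj_uv; have adj_fuv : bip_adj r2 (f u) (f v) by rewrite f_hom.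
  rewrite !inE (bip_adj_sides adj_uv) (bip_adj_sides adj_fuv).
  by case: (is_inl (f u)); case: (is_inl u).
exact: (closed_connect closed_side (G1_conn x y)).
Qed.

Definition edge_of (A B : finType) (r : A -> B -> bool) (u v : A + B) : option (edgeT r) :=
  match u, v with
  | inl a, inr b | inr b, inl a => insub (a, b)
  | _, _ => None
  end.

Lemma edge_ofP (A B : finType) (r : A -> B -> bool) u v : bip_adj r u v ->
  exists2 c, edge_of r u v = Some c & ends c =i pred2 u v.
Proof.
case: u => [a|b]; case: v => [a'|b'] //= rab.
- case: insubP => [c _ cE | ]; last by rewrite rab.
  by exists c => // w; rewrite !inE cE.
- case: insubP => [c _ cE | ]; last by rewrite rab.
  by exists c => // w; rewrite !inE cE orbC.
Qed.

(* The fallback [inl] is never taken when [f] is a graph homomorphism, by [edge_ofP]. *)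
Definition H_map (f : A1 + B1 -> A2 + B2) (u : (A1 + B1) + edgeT r1) :
    (A2 + B2) + edgeT r2 :=
  match u with
  | inl x => inl (f x)
  | inr c => if edge_of r2 (f (inl (val c).1)) (f (inr (val c).2)) is Some c'
             then inr c' else inl (f (inl (val c).1))
  end.

Lemma H_map_vertex f x : H_map f (inl x) = inl (f x).
Proof. by []. Qed.

Lemma H_map_edge f : (forall x y, bip_adj r2 (f x) (f y) = bip_adj r1 x y) ->
  forall c, exists2 c', H_map f (inr c) = inr c' &
    ends c' =i pred2 (f (inl (val c).1)) (f (inr (val c).2)).
Proof.
move=> f_hom c.
have adj : bip_adj r2 (f (inl (val c).1)) (f (inr (val c).2)) by rewrite f_hom /= (valP c).
by have [c' c'E ends_c'] := edge_ofP adj; exists c'; rewrite // /H_map c'E.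
Qed.

Lemma H_map_hom f f' : cancel f f' -> cancel f' f ->
    (forall x y, bip_adj r2 (f x) (f y) = bip_adj r1 x y) ->
  connected (bip_adj r1) ->
  forall u v, H_adj r2 (H_map f u) (H_map f v) = H_adj r1 u v.
Proof.
move=> fK f'K f_hom G1_conn.
have vertex_edge x c : H_adj r2 (H_map f (inl x)) (H_map f (inr c)) = H_adj r1 (inl x) (inr c).
  have [c' -> ends_c'] := H_map_edge f_hom c.
  by rewrite !H_adj_edge ends_c' !inE !(inj_eq (can_inj fK)).
case=> [x|c] [y|d].
- rewrite !H_map_vertex !H_adj_vertices; move: (bip_iso_sides f_hom G1_conn x y).
  by case: (is_inl (f x)); case: (is_inl x); case: (is_inl (f y)); case: (is_inl y).
- exact: vertex_edge.
- by rewrite H_adj_sym vertex_edge H_adj_sym.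
- by have [c' -> _] := H_map_edge f_hom c; have [d' -> _] := H_map_edge f_hom d.
Qed.

End GToH.

Lemma H_map_can (A1 B1 : finType) (r1 : A1 -> B1 -> bool)
    (A2 B2 : finType) (r2 : A2 -> B2 -> bool) (f : A1 + B1 -> A2 + B2) f' :
    cancel f f' -> cancel f' f ->
    (forall x y, bip_adj r2 (f x) (f y) = bip_adj r1 x y) ->
  cancel (@H_map _ _ r1 _ _ r2 f) (@H_map _ _ r2 _ _ r1 f').
Proof.
move=> fK f'K f_hom; case=> [x|c]; first by rewrite !H_map_vertex fK.
have [c' -> ends_c'] := H_map_edge f_hom c.
have [c'' -> ends_c''] := H_map_edge (can_iso_hom f'K f_hom) c'.
congr inr; apply: ends_inj => w; rewrite ends_c'' !inE.
have := ends_c' (f w); rewrite !inE !(inj_eq (can_inj fK)) => <-.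
by rewrite -!(inj_eq (can_inj fK)) !f'K.
Qed.

Theorem mainTheorem4
  (A1 B1 : finType) (r1 : A1 -> B1 -> bool)
  (A2 B2 : finType) (r2 : A2 -> B2 -> bool) :
  connected (bip_adj r1) -> connected (bip_adj r2) ->
  3 <= #|A1| -> 3 <= #|B1| -> 3 <= #|A2| -> 3 <= #|B2| ->
  (graph_iso (bip_adj r1) (bip_adj r2) <-> graph_iso (H_adj r1) (H_adj r2)).
Proof.
move=> G1_conn _ A13 B13 A23 B23; split.
- move=> [f [[f' fK f'K] f_hom]].
  exists (@H_map _ _ r1 _ _ r2 f); split; last exact: H_map_hom fK f'K f_hom G1_conn.
  by exists (@H_map _ _ r2 _ _ r1 f'); apply: H_map_can; last exact: can_iso_hom f'K f_hom.
- move=> [g [[h gK hK] g_hom]].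
  exact: H_iso_G gK hK g_hom A13 B13 A23 B23.
Qed.
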